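(* Let $b>1$, $p\in\mathbb{R}$, $s<pb$, and set $\tilde c_s=\frac{p^2-s^2-b^2+1}{2(pb-s)}$ and $\tilde A_s=s^2-2\tilde c_ss-1$ $(=p^2-2bp\tilde c_s-b^2)$. The following are equivalent: (1) $s\ge\tilde c_s$; (2) there exists a unique function $\tilde\psi_s$, continuous on $[1,b]$ and differentiable on $(1,b)$, with $\tilde\psi_s(1)=s$, $\tilde\psi_s(b)=p$ and $\tilde\psi_s^2-2\tilde c_sx\tilde\psi_s-x^2=\tilde A_s$ on $[1,b]$; explicitly $\tilde\psi_s(x)=\tilde c_sx+\sqrt{\tilde A_s+(1+\tilde c_s^2)x^2}$. Moreover this solution satisfies $(x\tilde\psi_s)'>0$. *)

From HB Require Import structures.
From mathcomp Require Import all_boot all_order all_algebra.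
From mathcomp Require Import all_classical all_reals all_analysis.
Set Implicit Arguments. Unset Strict Implicit. Unset Printing Implicit Defensive.
Import Order.TTheory GRing.Theory Num.Theory.
Import numFieldNormedType.Exports.
Local Open Scope classical_set_scope.
Local Open Scope ring_scope.

Definition ctil {R : realType} (b p s : R) : R :=
  (p ^+ 2 - s ^+ 2 - b ^+ 2 + 1) / (2 * (p * b - s)).

Definition Atil {R : realType} (b p s : R) : R :=
  s ^+ 2 - 2 * ctil b p s * s - 1.

Definition is_sol {R : realType} (b p s : R) (psi : R -> R) : Prop :=
  [/\ {within `[1, b], continuous psi},
      (forall x : R, x \in `]1, b[ -> derivable psi x 1),
      psi 1 = s, psi b = p &
      (forall x : R, x \in `[1, b] ->
         psi x ^+ 2 - 2 * ctil b p s * x * psi x - x ^+ 2 = Atil b p s)].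

(* The equation
   psi^2 - 2 c x psi - x^2 = A says (psi - c x)^2 = D(x) := A + (1 + c^2) x^2,
   and the choice of c makes D(1) = (s - c)^2 and D(b) = (p - c b)^2 with
   p - c b > 0, so D > 0 on (1, b].  Hence psi - c x = +-sqrt D on (1, b] with
   a sign that cannot change there (intermediate value theorem), and the
   endpoint b forces the + sign.  At x = 1 this reads s = c + |s - c|, which is
   exactly c <= s.  Finally (x psi)' = (psi^2 + x^2) / sqrt D > 0. *)

From HB Require Import structures.
From mathcomp Require Import all_boot all_order all_algebra.
From mathcomp Require Import all_classical all_reals all_analysis.
From mathcomp Require Import ring lra.
Import Order.TTheory GRing.Theory Num.Theory.
Import numFieldNormedType.Exports.
Local Open Scope classical_set_scope.
Local Open Scope ring_scope.

Lemma continuous_sqr_eq_sqrt {R : realType} {f g : R -> R} {a b : R} :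
  {within `[a, b], continuous f} -> {in `[a, b], forall y, f y ^+ 2 = g y} ->
  {in `]a, b], forall y, 0 < g y} -> 0 < f b ->
  {in `]a, b], forall y, f y = Num.sqrt (g y)}.
Proof.
move=> cf fg gpos fb x xab; have gx := gpos x xab.
have /orP[/eqP // | /eqP fxN] :
    (f x == Num.sqrt (g x)) || (f x == - Num.sqrt (g x)).
  by rewrite -eqf_sqr sqr_sqrtr ?ltW // fg // subset_itv_oc_cc.
have fx0 : f x < 0 by rewrite fxN oppr_lt0 sqrtr_gt0.
move: xab; rewrite in_itv /= => /andP[ax xb].
have cfx : {within `[x, b], continuous f}.
  by apply: continuous_subspaceW cf; apply: subset_itvr; rewrite bnd_simp ltW.
have [|z zxb fz0] := IVT xb cfx (v := 0).
  by rewrite ge_min le_max (ltW fx0) (ltW fb) orbT.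
have zab : z \in `]a, b].
  by move: zxb; rewrite !in_itv /= => /andP[xz ->]; rewrite (lt_le_trans ax).
by have := gpos z zab; rewrite -fg ?subset_itv_oc_cc // fz0 expr0n ltxx.
Qed.

Section QuadraticRoot.
Context {R : realType}.
Variables (c A : R).

Definition quad_disc (x : R) : R := A + (1 + c ^+ 2) * x ^+ 2.
Definition quad_root (x : R) : R := c * x + Num.sqrt (quad_disc x).

Lemma quad_eqE (x y : R) :
  y ^+ 2 - 2 * c * x * y - x ^+ 2 = A <-> (y - c * x) ^+ 2 = quad_disc x.
Proof.
have e : (y - c * x) ^+ 2 - quad_disc x = y ^+ 2 - 2 * c * x * y - x ^+ 2 - A.
  by rewrite /quad_disc; ring.
split=> h; first by rewrite /quad_disc -h; ring.
by apply/subr0_eq/esym; rewrite -e h subrr.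
Qed.

Lemma lt_quad_disc {x y : R} : 0 <= x -> x < y -> quad_disc x < quad_disc y.
Proof.
move=> x0 xy; have c1 : 0 < 1 + c ^+ 2 by rewrite ltr_pwDl ?sqr_ge0.
rewrite ltrD2l ltr_pM2l // ltr_pXn2r // ?nnegrE //.
exact: ltW (le_lt_trans x0 xy).
Qed.

Lemma quad_root_eq (x : R) : 0 <= quad_disc x ->
  quad_root x ^+ 2 - 2 * c * x * quad_root x - x ^+ 2 = A.
Proof. by move=> D0; apply/quad_eqE; rewrite /quad_root addrC addKr sqr_sqrtr. Qed.

Lemma continuous_quad_root : continuous quad_root.
Proof.
move=> x; apply: cvgD; first exact: mulrl_continuous.
apply: continuous_comp; last exact: sqrt_continuous.
apply: cvgD; first exact: cvg_cst.
by apply: cvgM; [exact: cvg_cst | apply: cvgM; exact: cvg_id].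
Qed.

Lemma is_derive_quad_root (x : R) : 0 < quad_disc x ->
  is_derive x 1 quad_root (c + (1 + c ^+ 2) * x / Num.sqrt (quad_disc x)).
Proof.
move=> D0; have q0 : Num.sqrt (quad_disc x) != 0 by rewrite gt_eqF ?sqrtr_gt0.
have dD : is_derive x 1 quad_disc ((1 + c ^+ 2) * (2 * x)).
  by apply: is_derive_eq; rewrite add0r mul1r -[_ *: _]/(_ * _) -[x%:A]/(x * 1); ring.
have dsqrt := is_derive1_comp (is_derive1_sqrt D0) dD.
have dlin : is_derive x 1 ( *%R c) c.
  by apply: is_derive_eq; rewrite -[_ *: _]/(_ * _) mulr1.
apply: is_derive_eq (is_deriveD dlin dsqrt) _.
by field.
Qed.

Lemma mul_quad_root_derive_gt0 (x : R) : 0 < quad_disc x ->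
  derivable (fun y : R => y * quad_root y) x 1 /\
  0 < 'D_1 (fun y : R => y * quad_root y) x.
Proof.
move=> D0; have dM := is_deriveM (is_derive_id x 1) (is_derive_quad_root x D0).
split; first exact: ex_derive.
rewrite derive_val.
set q := Num.sqrt (quad_disc x); have q0 : 0 < q by rewrite sqrtr_gt0.
have -> : x *: (c + (1 + c ^+ 2) * x / q) + quad_root x *: 1 =
    ((q + c * x) ^+ 2 + x ^+ 2) / q.
  by rewrite /quad_root -/q -![_ *: _]/(_ * _); field; rewrite gt_eqF.
rewrite divr_gt0 //; have [-> | x0] := eqVneq x 0.
  by rewrite mulr0 addr0 expr0n addr0 exprn_gt0.
by rewrite ltr_pwDr ?sqr_ge0 // exprn_even_gt0 ?x0.
Qed.

End QuadraticRoot.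

Section TildePsi.
Context {R : realType}.
Variables (b p s : R).
Hypotheses (hb : 1 < b) (hs : s < p * b).
Local Notation c := (ctil b p s).
Local Notation A := (Atil b p s).

Lemma quad_disc_tilde1 : quad_disc c A 1 = (s - c) ^+ 2.
Proof. by rewrite /quad_disc /Atil; ring. Qed.

Lemma ctil_def : c * (2 * (p * b - s)) = p ^+ 2 - s ^+ 2 - b ^+ 2 + 1.
Proof. by rewrite /ctil divfK // mulf_neq0 // subr_eq0 gt_eqF. Qed.

Lemma quad_disc_tildeb : quad_disc c A b = (p - c * b) ^+ 2.
Proof.
apply/subr0_eq; rewrite -(subrr (c * (2 * (p * b - s)))) {2}ctil_def.
by rewrite /quad_disc /Atil; ring.
Qed.

Lemma ctil_mul_lt : c * b < p.
Proof.
have pbs : 0 < 2 * (p * b - s) by rewrite mulr_gt0 ?subr_gt0.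
rewrite -subr_gt0 -(pmulr_lgt0 _ pbs).
have -> : (p - c * b) * (2 * (p * b - s)) =
    2 * p * (p * b - s) - b * (c * (2 * (p * b - s))) by ring.
have -> : 2 * p * (p * b - s) - b * (c * (2 * (p * b - s))) =
    (b - 1) * (p ^+ 2 + s ^+ 2) + (p - s) ^+ 2 + b * (b ^+ 2 - 1).
  by rewrite ctil_def; ring.
have b0 : 0 < b by rewrite (lt_trans ltr01).
have := sqr_ge0 (p - s).
have : 0 <= (b - 1) * (p ^+ 2 + s ^+ 2).
  by apply: mulr_ge0; [rewrite subr_ge0 ltW | rewrite addr_ge0 ?sqr_ge0].
have : 0 < b * (b ^+ 2 - 1) by rewrite mulr_gt0 // subr_gt0 expr_gt1 // ltW.
lra.
Qed.

Lemma quad_disc_tilde_gt0 {x : R} : 1 < x -> 0 < quad_disc c A x.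
Proof.
move=> x1; apply: le_lt_trans (lt_quad_disc c A ler01 x1).
by rewrite quad_disc_tilde1 sqr_ge0.
Qed.

Lemma quad_disc_tilde_ge0 {x : R} : 1 <= x -> 0 <= quad_disc c A x.
Proof.
rewrite le_eqVlt => /orP[/eqP <- | /quad_disc_tilde_gt0/ltW //].
by rewrite quad_disc_tilde1 sqr_ge0.
Qed.

Lemma quad_root_tilde1 : (quad_root c A 1 == s) = (c <= s).
Proof.
rewrite /quad_root quad_disc_tilde1 sqrtr_sqr mulr1 -subr_ge0 ger0_def.
by rewrite addrC eq_sym -subr_eq eq_sym.
Qed.

Lemma quad_root_tildeb : quad_root c A b = p.
Proof.
rewrite /quad_root quad_disc_tildeb sqrtr_sqr gtr0_norm ?subr_gt0 ?ctil_mul_lt //.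
by rewrite addrC subrK.
Qed.

Lemma is_sol_quad_root : c <= s -> is_sol b p s (quad_root c A).
Proof.
move=> cs; split.
- exact/continuous_subspaceT/continuous_quad_root.
- move=> x; rewrite in_itv /= => /andP[x1 _].
  have dq := is_derive_quad_root c A x (quad_disc_tilde_gt0 x1).
  exact: ex_derive.
- by apply/eqP; rewrite quad_root_tilde1.
- exact: quad_root_tildeb.
- move=> x; rewrite in_itv /= => /andP[x1 _].
  exact/quad_root_eq/quad_disc_tilde_ge0.
Qed.

Lemma sol_eq_quad_root_oc {phi : R -> R} :
  is_sol b p s phi -> {in `]1, b], phi =1 quad_root c A}.
Proof.
case=> cphi _ _ phib phiE x x1b.
have cf : {within `[1, b], continuous (phi - *%R c)}.
  exact/within_continuousB/continuous_subspaceT/mulrl_continuous.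
have := continuous_sqr_eq_sqrt (g := quad_disc c A) cf _ _ _ x x1b.
rewrite /quad_root /= => <-.
- by rewrite addrC subrK.
- by move=> y y1b; apply/quad_eqE/phiE.
- by move=> y; rewrite in_itv /= => /andP[/quad_disc_tilde_gt0].
- by rewrite -[(phi - _) b]/(phi b - c * b) phib subr_gt0 ctil_mul_lt.
Qed.

Lemma sol_eq_quad_root_cc {phi : R -> R} : c <= s -> is_sol b p s phi ->
  {in `[1, b], phi =1 quad_root c A}.
Proof.
move=> cs sol x; rewrite in_itv /= le_eqVlt => /andP[/orP[/eqP <- _ | x1 xb]].
  by case: sol => _ _ -> _ _; apply/esym/eqP; rewrite quad_root_tilde1.
by apply: sol_eq_quad_root_oc; rewrite // in_itv /= x1 xb.
Qed.

Lemma sol_mul_derive_gt0 (psi : R -> R) : is_sol b p s psi ->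
  {in `]1, b[, forall x, derivable (fun y : R => y * psi y) x 1 /\
                         0 < 'D_1 (fun y : R => y * psi y) x}.
Proof.
move=> sol x x1b; have x1 : 1 < x by move: x1b; rewrite in_itv => /andP[].
have near_psi : \forall y \near x, y * quad_root c A y = y * psi y.
  near=> y; have y1b : y \in `]1, b[ by near: y; exact: near_in_itvoo.
  by rewrite (sol_eq_quad_root_oc sol) // subset_itv_oo_oc.
have [dq Dq] := mul_quad_root_derive_gt0 c A x (quad_disc_tilde_gt0 x1).
split; first exact: (near_eq_derivable near_psi dq).
by rewrite -(near_eq_derive (1 : R) near_psi).
Unshelve. all: by end_near.
Qed.

End TildePsi.

Theorem lemma4p5 (R : realType) (b p s : R) (hb : 1 < b) (hs : s < p * b) :
  (ctil b p s <= s <->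
    exists psi : R -> R,
      [/\ is_sol b p s psi,
          (forall phi : R -> R, is_sol b p s phi ->
             forall x : R, x \in `[1, b] -> phi x = psi x) &
          (forall x : R, x \in `[1, b] ->
             psi x = ctil b p s * x
                     + Num.sqrt (Atil b p s + (1 + ctil b p s ^+ 2) * x ^+ 2))])
  /\
  (ctil b p s <= s -> forall psi : R -> R, is_sol b p s psi ->
     forall x : R, x \in `]1, b[ ->
       derivable (fun y : R => y * psi y) x 1 /\
       0 < 'D_1 (fun y : R => y * psi y) x).
Proof.
split; last by move=> _ psi; exact: sol_mul_derive_gt0.
split=> [cs | [psi [[_ _ psi1 _ _] _ psiE]]].
  exists (quad_root (ctil b p s) (Atil b p s)); split.
  - exact: is_sol_quad_root.
  - by move=> phi; apply: sol_eq_quad_root_cc.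
  - by [].
have psi1E : psi 1 = quad_root (ctil b p s) (Atil b p s) 1.
  by rewrite psiE // in_itv /= lexx ltW.
by rewrite -(quad_root_tilde1 b p s) -psi1E psi1.
Qed.
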